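(* The family $\mathcal C_n=\{C(w): w\in\mathcal W_n\}$ is a partition of $\mathcal W_n$.
   Context: Let $\mathcal A=\{a_1<a_2<\dots\}$ be a finite or countably infinite totally ordered alphabet. A word is primitive if it is not of the form $u^r$ with $r\ge 2$. $\mathcal W_n$ is the set of primitive words of length $n$ whose first letter is the smallest letter $a_w$ occurring in $w$ and whose last letter is different from $a_w$. Each $w\in\mathcal W_n$ decomposes uniquely as $w=B_1(w)\cdots B_{N}(w)$ into blocks, $N=N_n(w)$: each block begins with a run of $a_w$ and ends just before the next run of $a_w$. For a permutation $\sigma$ of $\{1,\dots,N\}$ set $\sigma.w=B_{\sigma(1)}(w)\cdots B_{\sigma(N)}(w)$, and $C(w)=\{\sigma.w:\sigma\in\mathfrak S_N,\ \sigma.w\in\mathcal W_n\}$. *)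

From HB Require Import structures.
From mathcomp Require Import all_boot all_order all_fingroup.
Set Implicit Arguments. Unset Strict Implicit. Unset Printing Implicit Defensive.
Import Order.TTheory.
Local Open Scope order_scope.

Section Words.
Context {d : Order.disp_t} {A : orderType d}.

Definition primitive (w : seq A) : Prop :=
  ~ exists (u : seq A) (r : nat), (2 <= r)%N /\ w = flatten (nseq r u).

Definition inW (n : nat) (w : seq A) : Prop :=
  [/\ size w = n, primitive w &
      exists (a : A) (t : seq A), w = a :: t
        /\ all (fun y => a <= y) w /\ last a t != a].

(* right-to-left construction of the block decomposition w.r.t. letter a:
   a new block is started at a letter x <> a immediately followed by a *)
Definition block_step (a : A) (x : A) (acc : seq (seq A)) : seq (seq A) :=
  match acc with
  | [::] => [:: [:: x]]
  | b :: rest =>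
      if (x != a) && (head x b == a) then [:: x] :: b :: rest
      else (x :: b) :: rest
  end.

(* blocks B_1(w) ... B_N(w), using the first letter (= a_w for w in W_n) *)
Definition blocks (w : seq A) : seq (seq A) :=
  match w with
  | [::] => [::]
  | a :: _ => foldr (block_step a) [::] w
  end.

Definition perm_blocks (w : seq A) (s : 'S_(size (blocks w))) : seq A :=
  flatten [seq nth [::] (blocks w) (s i) | i <- enum 'I_(size (blocks w))].

Definition Cl (n : nat) (w : seq A) (v : seq A) : Prop :=
  exists s : 'S_(size (blocks w)), v = perm_blocks s /\ inW n v.

End Words.

From mathcomp Require Import all_boot all_order all_fingroup.
Set Implicit Arguments. Unset Strict Implicit. Unset Printing Implicit Defensive.

(* For w in W_n with smallest letter a, every block of w has the shape a^k y with
   k > 0 and y a nonempty word avoiding a, and [blocks] inverts [flatten] on any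
   sequence of such words.  Hence a rearrangement v of the blocks of w has, up to
   order, the same blocks as w, and C(v) = C(w).  Two classes C(w), C(w') therefore
   coincide when the blocks of w and w' agree up to permutation, and are disjoint
   otherwise. *)

Lemma perm_eq_nth_permP (T : eqType) (x0 : T) (r t : seq T) :
  reflect (exists s : 'S_(size t), r = [seq nth x0 t (s i) | i <- enum 'I_(size t)])
          (perm_eq r t).
Proof.
have mkE (s : 'S_(size t)) : [tuple tnth (in_tuple t) (s i) | i < size t] =
    [seq nth x0 t (s i) | i <- enum 'I_(size t)] :> seq T.
  by rewrite /= enumT unlock; apply: eq_map => i; rewrite (tnth_nth x0).
by apply: (iffP (@tuple_permP _ _ r (in_tuple t))) => -[s ->]; exists s; rewrite mkE.
Qed.

Section Blocks.
Variables (d : Order.disp_t) (A : orderType d) (a : A).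

Definition block_suffix (b : seq A) : Prop :=
  exists k y, [/\ y != [::], all (predC1 a) y & b = nseq k a ++ y].

Definition is_block (b : seq A) : Prop := exists2 b', block_suffix b' & b = a :: b'.

Lemma flatten_block_step x acc : flatten (block_step a x acc) = x :: flatten acc.
Proof. by case: acc => [|b r] //=; case: ifP. Qed.

Lemma flatten_foldr_block_step s : flatten (foldr (block_step a) [::] s) = s.
Proof. by elim: s => //= x s IH; rewrite flatten_block_step IH. Qed.

Lemma foldr_block_step_suffix x s : last x s != a ->
  exists b rest, [/\ foldr (block_step a) [::] (x :: s) = b :: rest,
                     block_suffix b & {in rest, forall c, is_block c}].
Proof.
elim: s x => [|x' s IH] x /= last_s.
  by exists [:: x], [::]; split => //; exists 0, [:: x]; rewrite /= last_s.
have [b [rest [/= -> [k [y [y_ne ya ->]]] rest_blocks]]] := IH _ last_s.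
have head_a : head x (nseq k a ++ y) == a -> 0 < k.
  by case: k => //; case: y y_ne ya => //= z y _ /andP [/negbTE ->].
rewrite /=; case: ifP => [/andP [xa /head_a k_gt0] | x_not_new].
  exists [:: x], ((nseq k a ++ y) :: rest); split => //.
    by exists 0, [:: x]; rewrite /= xa.
  move=> c; rewrite inE => /predU1P [-> | /rest_blocks //].
  by case: k k_gt0 {head_a} => // k _; exists (nseq k a ++ y) => //; exists k, y.
exists (x :: nseq k a ++ y), rest; split => //.
have [-> | xa] := eqVneq x a; first by exists k.+1, y.
case: k x_not_new {head_a} => [_ | k]; last by rewrite /= xa eqxx.
by exists 0, (x :: y); rewrite /= xa ya.
Qed.

Lemma blocks_is_block t : last a t != a -> {in blocks (a :: t), forall b, is_block b}.
Proof.
case: t => [|x t]; first by rewrite /= eqxx.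
move=> /= /(@foldr_block_step_suffix x t) [b [rest [/= E b_suffix rest_blocks]]].
rewrite /= E /= eqxx /= => c; rewrite inE => /predU1P [-> | /rest_blocks //].
by exists b.
Qed.

Lemma foldr_block_step_nseq k b rest :
  foldr (block_step a) (b :: rest) (nseq k a) = (nseq k a ++ b) :: rest.
Proof. by elim: k => // k /= ->; rewrite /block_step eqxx. Qed.

Lemma foldr_block_step_free y acc : y != [::] -> all (predC1 a) y ->
  {in acc, forall b, is_block b} -> foldr (block_step a) acc y = y :: acc.
Proof.
move=> + + acc_blocks; elim: y => // z y IH _ /= /andP [za ya].
case: y IH ya => [_ _ | z' y IH ya]; last first.
  have /andP [z'a _] := ya.
  by rewrite /= in IH *; rewrite IH //= (negbTE z'a) andbF.
case: acc acc_blocks => [|c rest] //= /(_ c (mem_head _ _)) [c' _ ->].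
by rewrite /= za eqxx.
Qed.

Lemma foldr_block_step_flatten r : {in r, forall b, is_block b} ->
  foldr (block_step a) [::] (flatten r) = r.
Proof.
elim: r => // b r IH r_blocks /=.
have r'_blocks : {in r, forall c, is_block c}.
  by move=> c c_r; apply: r_blocks; rewrite inE c_r orbT.
have [_ [k [y [y_ne ya ->]]] ->] := r_blocks b (mem_head _ _).
rewrite foldr_cat IH // -cat_cons foldr_cat (foldr_block_step_free y_ne ya r'_blocks).
by rewrite -[a :: nseq k a]/(nseq k.+1 a) foldr_block_step_nseq.
Qed.

Lemma blocks_flatten r : {in r, forall b, is_block b} -> blocks (flatten r) = r.
Proof.
case: r => // b r r_blocks; have := foldr_block_step_flatten r_blocks.
by have [b' _ ->] := r_blocks b (mem_head _ _).
Qed.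

End Blocks.

Lemma flatten_blocks (d : Order.disp_t) (A : orderType d) (w : seq A) :
  flatten (blocks w) = w.
Proof. by case: w => //= a t; rewrite -/(foldr _ _ (a :: t)) flatten_foldr_block_step. Qed.

Section Classes.
Variables (d : Order.disp_t) (A : orderType d) (n : nat).
Implicit Types w v : seq A.

Lemma ClE w v :
  Cl n w v <-> (exists2 r, perm_eq r (blocks w) & v = flatten r) /\ inW n v.
Proof.
split=> [[s [-> v_in]] | [[r /(perm_eq_nth_permP [::]) [s ->] ->] v_in]].
  by split=> //; exists [seq nth [::] (blocks w) (s i) | i <- enum 'I_(size (blocks w))];
    first by apply/(perm_eq_nth_permP [::]); exists s.
by exists s.
Qed.

Lemma Cl_refl w : inW n w -> Cl n w w.
Proof. by move=> w_in; apply/ClE; split=> //; exists (blocks w); rewrite ?flatten_blocks. Qed.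

Lemma Cl_inW w v : Cl n w v -> inW n v.
Proof. by case/ClE. Qed.

Lemma Cl_perm_eq w w' v :
  perm_eq (blocks w) (blocks w') -> Cl n w v -> Cl n w' v.
Proof.
move=> ww' /ClE [[r rw ->] v_in]; apply/ClE; split=> //.
by exists r => //; apply: perm_trans rw ww'.
Qed.

Lemma perm_eq_blocks_Cl w v : inW n w -> Cl n w v -> perm_eq (blocks v) (blocks w).
Proof.
move=> [_ _ [a [t [-> [_ last_t]]]]] /ClE [[r rw ->] _].
by rewrite (@blocks_flatten _ _ a) // => b; rewrite (perm_mem rw); apply: blocks_is_block.
Qed.

End Classes.

Theorem proposition2 (d : Order.disp_t) (A : orderType d)
  (f : A -> nat) (f_inj : injective f) (n : nat) :
  (forall w : seq A, inW n w ->
     (exists v, Cl n w v) /\ (forall v, Cl n w v -> inW n v)) /\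
  (forall v : seq A, inW n v -> exists w, inW n w /\ Cl n w v) /\
  (forall w w' : seq A, inW n w -> inW n w' ->
     (forall v, Cl n w v <-> Cl n w' v) \/
     (forall v, ~ (Cl n w v /\ Cl n w' v))).
Proof.
split; first by move=> w w_in; split; [exists w; apply: Cl_refl | apply: Cl_inW].
split; first by move=> v v_in; exists v; split=> //; apply: Cl_refl.
move=> w w' w_in w'_in; case: (boolP (perm_eq (blocks w) (blocks w'))) => [ww' | not_ww'].
  by left=> v; split; apply: Cl_perm_eq; rewrite // perm_sym.
right=> v [wv w'v]; apply/negP: not_ww'.
by rewrite -(permPl (perm_eq_blocks_Cl w_in wv)) (perm_eq_blocks_Cl w'_in w'v).
Qed.
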